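(* Let $M$ be a finite abelian group of exponent greater than $2$, and let $f$ be a half-automorphism of $L_M$. Then $f((1,M))=(1,M)$, where $(1,M)=\{(1,x):x\in M\}$.
   Context: Let $K=\{1,a,b,c\}$ be the Klein four-group. Set $L_M=K\times M$ with the operation $(A,x)*(B,y)=(AB,xy)$ if $B=1$, and $(A,x)*(B,y)=(AB,x^{-1}y)$ if $B\neq 1$. A half-automorphism of a loop $L$ is a bijection $f:L\to L$ such that $f(XY)\in\{f(X)f(Y),f(Y)f(X)\}$ for all $X,Y\in L$. *)

From mathcomp Require Import all_boot all_fingroup all_solvable.
Set Implicit Arguments. Unset Strict Implicit. Unset Printing Implicit Defensive.
Local Open Scope group_scope.

(* The Klein four-group K = {1,a,b,c}, realised as bool * bool with
   componentwise xor: 1 = (false,false), a = (true,false),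
   b = (false,true), c = (true,true). *)
Definition Klein : finType := (bool * bool)%type.
Definition K1 : Klein := (false, false).
Definition Kmul (A B : Klein) : Klein := (xorb A.1 B.1, xorb A.2 B.2).

Definition LM (gT : finGroupType) : finType := (Klein * gT)%type.

Definition Lmul (gT : finGroupType) (X Y : LM gT) : LM gT :=
  if Y.1 == K1 then (Kmul X.1 Y.1, (X.2 : gT) * Y.2)
  else (Kmul X.1 Y.1, (X.2 : gT)^-1 * Y.2).

Definition half_automorphism (gT : finGroupType) (f : LM gT -> LM gT) : Prop :=
  bijective f /\
  forall X Y : LM gT,
    f (Lmul X Y) = Lmul (f X) (f Y) \/ f (Lmul X Y) = Lmul (f Y) (f X).

Definition oneM (gT : finGroupType) : {set LM gT} := [set X : LM gT | X.1 == K1].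

From mathcomp Require Import all_boot all_fingroup all_solvable.
Set Implicit Arguments. Unset Strict Implicit. Unset Printing Implicit Defensive.
Local Open Scope group_scope.

(* Half-automorphisms preserve squares, hence fix the identity (the only
   idempotent of L_M).  Outside (1,M) every element squares to the identity,
   so by injectivity (1,x) with x^2 <> 1 cannot leave (1,M).  When x^2 = 1,
   write (1,x) = (1,xg)(1,g^-1) with g^2 <> 1 (exponent > 2); as M is abelian
   both factors have nontrivial squares, and (1,M) is closed under products
   in either order.  Finally f maps (1,M) into itself injectively. *)

Lemma Kmulii (A : Klein) : Kmul A A = K1.
Proof. by case: A => [[] []]. Qed.

Lemma Lmul_oneM (gT : finGroupType) (x y : gT) :
  Lmul (K1, x) (K1, y) = (K1, x * y).
Proof. by []. Qed.

Lemma Lmul_oneM_closed (gT : finGroupType) (X Y : LM gT) :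
  X \in oneM gT -> Y \in oneM gT -> Lmul X Y \in oneM gT.
Proof. by case: X Y => [A x] [B y]; rewrite !inE => /eqP /= -> /eqP /= ->. Qed.

Lemma Lmul_sqr_notin_oneM (gT : finGroupType) (X : LM gT) :
  X \notin oneM gT -> Lmul X X = (K1, 1).
Proof. by rewrite inE /Lmul => /negbTE ->; rewrite Kmulii mulVg. Qed.

Lemma Lmul_idem (gT : finGroupType) (X : LM gT) : Lmul X X = X -> X = (K1, 1).
Proof.
case: X => A x; rewrite /Lmul /=; case: eqP => [-> [] | nA [AA _]].
  by move/(canRL (mulKg x)); rewrite mulVg => ->.
by case: nA; rewrite -AA Kmulii.
Qed.

Lemma exponent_gt2_sqr (gT : finGroupType) :
  2 < exponent [set: gT] -> exists g : gT, g ^+ 2 != 1.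
Proof.
move=> Mexp; apply/existsP; apply: contraLR Mexp; rewrite negb_exists -leqNgt.
move=> /forallP sqr1; apply: dvdn_leq => //.
by apply/exponentP => x _; apply/eqP; rewrite -[_ == _]negbK sqr1.
Qed.

Section HalfAutomorphism.

Variables (gT : finGroupType) (f : LM gT -> LM gT).
Hypothesis hf : half_automorphism f.

Lemma half_automorphism_inj : injective f.
Proof. exact: bij_inj hf.1. Qed.

Lemma half_automorphism_sqr (X : LM gT) : f (Lmul X X) = Lmul (f X) (f X).
Proof. by case: (hf.2 X X). Qed.

Lemma half_automorphism_unit : f (K1, 1) = (K1, 1).
Proof. by apply: Lmul_idem; rewrite -half_automorphism_sqr Lmul_oneM mulg1. Qed.

Lemma half_automorphism_oneM_sqr (x : gT) :
  x ^+ 2 != 1 -> f (K1, x) \in oneM gT.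
Proof.
apply: contraNT => /Lmul_sqr_notin_oneM.
rewrite -half_automorphism_sqr -half_automorphism_unit Lmul_oneM -expg2.
by move/half_automorphism_inj => [->].
Qed.

Lemma half_automorphism_mul_oneM (X Y : LM gT) :
  f X \in oneM gT -> f Y \in oneM gT -> f (Lmul X Y) \in oneM gT.
Proof. by move=> fX fY; case: (hf.2 X Y) => ->; apply: Lmul_oneM_closed. Qed.

End HalfAutomorphism.

Theorem proposition4p1 (gT : finGroupType)
  (Mab : abelian [set: gT]) (Mexp : 2 < exponent [set: gT])
  (f : LM gT -> LM gT) (hf : half_automorphism f) :
  f @: oneM gT = oneM gT.
Proof.
have [g g2] := exponent_gt2_sqr Mexp.
have commM (x y : gT) : commute x y by apply: (centsP Mab); rewrite inE.
suff fM : f @: oneM gT \subset oneM gT.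
  by apply/eqP; rewrite eqEcard fM (card_imset _ (half_automorphism_inj hf)) leqnn.
apply/subsetP => _ /imsetP [[A x] + ->]; rewrite inE => /eqP /= ->.
have [x2 | /(half_automorphism_oneM_sqr hf) //] := eqVneq (x ^+ 2) 1.
have -> : (K1, x) = Lmul (K1, x * g) (K1, g^-1) by rewrite Lmul_oneM mulgK.
apply: half_automorphism_mul_oneM => //; apply: half_automorphism_oneM_sqr => //.
  by rewrite expgMn // x2 mul1g.
by rewrite expgVn invg_eq1.
Qed.
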